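(* Let $A,B\in\Gamma(3)$. Then $\Gamma_\infty(3)\cdot A=\Gamma_\infty(3)\cdot B$ if and only if $Inv(A)=Inv(B)$.
   Context: Let $\omega=e^{2\pi i/3}$ and $\mathfrak{o}=\mathbb{Z}[\omega]$. $\Gamma(3)=\{A\in SL_3(\mathfrak{o}) : A\equiv I_3 \pmod{3\mathfrak{o}}\}$ (congruence entrywise), and $\Gamma_\infty(3)$ is the subgroup of upper triangular unipotent matrices in $\Gamma(3)$. For $A=\begin{pmatrix} a&b&c\\ d&e&f\\ g&h&i\end{pmatrix}$, $Inv(A)=(g,\,h,\,i,\,dh-eg,\,di-fg,\,ei-fh)\in\mathfrak{o}^6$, i.e. the bottom row of $A$ followed by the bottom row of the matrix $\Lambda^2(A)=\begin{pmatrix} ae-bd & af-cd & bf-ec\\ ah-bg & ai-cg & bi-hc\\ dh-eg & di-fg & ei-fh\end{pmatrix}$. *)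

(* The ring o = Z[omega] is realized inside the algebraic
   complex numbers algC. *)
From mathcomp Require Import all_boot all_order all_algebra all_field.
Set Implicit Arguments. Unset Strict Implicit. Unset Printing Implicit Defensive.
Import Order.TTheory GRing.Theory Num.Theory.
Local Open Scope ring_scope.

(* omega = e^{2 pi i/3} = (-1 + i sqrt 3)/2 *)
Definition omega : algC := (-1 + sqrtC (-3)) / 2%:R.

Definition in_o (x : algC) : Prop :=
  exists a b : int, x = a%:~R + b%:~R * omega.

Definition cong3 (x y : algC) : Prop :=
  exists z : algC, in_o z /\ x - y = 3%:R * z.

Definition Gamma3 (A : 'M[algC]_3) : Prop :=
  (forall i j, in_o (A i j)) /\ \det A = 1 /\
  (forall i j, cong3 (A i j) ((1%:M : 'M[algC]_3) i j)).

Definition GammaInf3 (U : 'M[algC]_3) : Prop :=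
  Gamma3 U /\ (forall i j : 'I_3, (j < i)%N -> U i j = 0) /\
  (forall i : 'I_3, U i i = 1).

Definition orbitInf3 (A : 'M[algC]_3) : 'M[algC]_3 -> Prop :=
  fun M => exists U, GammaInf3 U /\ M = U *m A.

Definition r0 : 'I_3 := ord0.
Definition r1 : 'I_3 := inord 1.
Definition r2 : 'I_3 := inord 2.

Definition Inv (A : 'M[algC]_3) : seq algC :=
  [:: A r2 r0; A r2 r1; A r2 r2;
      A r1 r0 * A r2 r1 - A r1 r1 * A r2 r0;
      A r1 r0 * A r2 r2 - A r1 r2 * A r2 r0;
      A r1 r1 * A r2 r2 - A r1 r2 * A r2 r1].

From mathcomp Require Import all_boot all_order all_algebra all_field ring.
Set Implicit Arguments. Unset Strict Implicit. Unset Printing Implicit Defensive.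
Import Order.TTheory GRing.Theory Num.Theory.
Local Open Scope ring_scope.

(* Left multiplication by an upper unitriangular U keeps the bottom row of B
   and adds a multiple of it to the middle row, so it changes neither the
   bottom row nor the 2x2 minors of the two bottom rows: Inv is constant on
   Gamma_inf(3)-orbits.  Conversely, assume Inv A = Inv B and put
   U := A adj(B) = A B^-1, which lies in Gamma(3) since Gamma(3) is a group.
   The bottom row of U is that of B adj(B) = I because A and B share their
   bottom row, and the first column of U is that of A adj(A) = I because the
   first-row cofactors of a 3x3 matrix are exactly the minors recorded by Inv.
   So U is upper triangular with diagonal (1, u, 1), and det U = 1 forces
   u = 1; hence U is in Gamma_inf(3) and A = U B. *)

Lemma val_r1 : val r1 = 1%N. Proof. by rewrite /= inordK. Qed.
Lemma val_r2 : val r2 = 2%N. Proof. by rewrite /= inordK. Qed.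

Lemma ord3P (i : 'I_3) : [\/ i = r0, i = r1 | i = r2].
Proof.
case: i => [[|[|[|k]]] lt_i3] //.
- by apply: Or31; apply/val_inj.
- by apply: Or32; apply/val_inj; rewrite val_r1.
- by apply: Or33; apply/val_inj; rewrite val_r2.
Qed.

Section ThreeByThree.

Variable R : comPzRingType.
Implicit Types M N : 'M[R]_3.

Lemma mulmx3 M N i j :
  (M *m N) i j = M i r0 * N r0 j + M i r1 * N r1 j + M i r2 * N r2 j.
Proof.
rewrite mxE !big_ord_recl big_ord0 addr0 addrA.
have -> : lift ord0 ord0 = r1 :> 'I_3 by apply/val_inj; rewrite val_r1.
by have -> : lift ord0 (lift ord0 ord0) = r2 :> 'I_3 by apply/val_inj; rewrite val_r2.
Qed.

Lemma cofactor3_row0 M :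
  [/\ cofactor M r0 r0 = M r1 r1 * M r2 r2 - M r1 r2 * M r2 r1,
      cofactor M r0 r1 = - (M r1 r0 * M r2 r2 - M r1 r2 * M r2 r0) &
      cofactor M r0 r2 = M r1 r0 * M r2 r1 - M r1 r1 * M r2 r0].
Proof.
(* Reading the entries through nat indices lets simplification evaluate the
   lifted indices produced by the Laplace expansions. *)
pose f i j := M (inord i) (inord j).
have fE i j : M i j = f i j by rewrite /f !inord_val.
rewrite /cofactor !(expand_det_row _ ord0) !big_ord_recl !big_ord0 /cofactor.
rewrite !det_mx11 !mxE !fE /= /bump /=.
rewrite !(addn0, add0n, add1n, ltnn, ltn0, ltn0Sn) /= !inordK //.
by split; ring.
Qed.

End ThreeByThree.

Section SquareMatrices.

Variables (R : comPzRingType) (n : nat).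
Implicit Types A B : 'M[R]_n.

Lemma mul_mx_adj_row_eq A B i :
  A i =1 B i -> forall j, (A *m \adj B) i j = (\det B)%:M i j.
Proof.
move=> eq_row j; rewrite -mul_mx_adj !mxE.
by apply: eq_bigr => k _; rewrite eq_row.
Qed.

Lemma mul_mx_adj_cofactor_eq A B j :
  cofactor A j =1 cofactor B j -> forall i, (A *m \adj B) i j = (\det A)%:M i j.
Proof.
move=> eq_cof i; rewrite -mul_mx_adj !mxE.
by apply: eq_bigr => k _; rewrite !mxE eq_cof.
Qed.

Lemma det_upper_trig A :
  (forall i j : 'I_n, (j < i)%N -> A i j = 0) -> \det A = \prod_i A i i.
Proof.
move=> lowA; rewrite -det_tr det_trig; last first.
  by apply/is_trig_mxP => i j lt_ij; rewrite mxE lowA.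
by apply: eq_bigr => i _; rewrite mxE.
Qed.

Lemma upper_trig_diag1 A k :
  (forall i j : 'I_n, (j < i)%N -> A i j = 0) -> \det A = 1 ->
  (forall i, i != k -> A i i = 1) -> A k k = 1.
Proof.
move=> lowA detA diagA; move: detA.
by rewrite det_upper_trig // (bigD1 k) //= big1 ?mulr1.
Qed.

End SquareMatrices.

Definition upper_unitriangular (R : pzRingType) n (U : 'M[R]_n) : Prop :=
  (forall i j : 'I_n, (j < i)%N -> U i j = 0) /\ (forall i, U i i = 1).

Lemma upper_unitriangular1 (R : pzRingType) n :
  upper_unitriangular (1%:M : 'M[R]_n).
Proof.
split=> [i j lt_ji | i]; last by rewrite mxE eqxx.
by rewrite mxE -val_eqE gtn_eqF.
Qed.

Lemma upper_unitriangular_mul (R : pzRingType) n (U V : 'M[R]_n) :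
  upper_unitriangular U -> upper_unitriangular V ->
  upper_unitriangular (U *m V).
Proof.
move=> [lowU diagU] [lowV diagV]; split=> [i j lt_ji | i]; rewrite mxE.
  apply: big1 => k _; have [lt_ki | le_ik] := ltnP k i; first by rewrite lowU ?mul0r.
  by rewrite lowV ?mulr0 // (leq_trans lt_ji).
rewrite (bigD1 i) //= diagU diagV mulr1 big1 ?addr0 // => k ne_ki.
have [lt_ki | lt_ik | eq_ki] := ltngtP k i; first by rewrite lowU ?mul0r.
  by rewrite lowV ?mulr0.
by rewrite (val_inj eq_ki) eqxx in ne_ki.
Qed.

Lemma mul_adj_upper_unitriangular (R : comPzRingType) (A B : 'M[R]_3) :
  A r2 =1 B r2 -> cofactor A r0 =1 cofactor B r0 ->
  \det A = 1 -> \det B = 1 -> upper_unitriangular (A *m \adj B).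
Proof.
move=> eq_row2 eq_cof0 detA detB; set U := A *m \adj B.
have row2U j : U r2 j = (r2 == j)%:R.
  by rewrite mul_mx_adj_row_eq // detB mxE.
have col0U i : U i r0 = (i == r0)%:R.
  by rewrite mul_mx_adj_cofactor_eq // detA mxE.
have lowU (i j : 'I_3) : (j < i)%N -> U i j = 0.
  have [->|->|->] := ord3P i; have [->|->|->] := ord3P j;
    rewrite /= ?val_r1 ?val_r2 // => _;
    by rewrite ?row2U ?col0U -val_eqE /= ?val_r1 ?val_r2.
have detU : \det U = 1.
  have := det_mulmx (\adj B) B.
  by rewrite mul_adj_mx detB det_scalar expr1n mulr1 det_mulmx detA mul1r => <-.
have diagU i : i != r1 -> U i i = 1.
  by have [->|->|->] := ord3P i; rewrite ?eqxx // ?row2U ?col0U eqxx.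
split=> // i; have [->|] := eqVneq i r1; last exact: diagU.
exact: upper_trig_diag1 diagU.
Qed.

Lemma omega_min_poly : omega ^+ 2 + omega + 1 = 0.
Proof.
rewrite /omega; set s := sqrtC _.
have s2 : s ^+ 2 = -3 by rewrite sqrtCK.
have nz2 : (2%:R : algC) != 0 by rewrite pnatr_eq0.
rewrite (_ : _ + _ = (s ^+ 2 + 3) / 4%:R); last by field.
by rewrite s2 addNr mul0r.
Qed.

Lemma in_o_int (k : int) : in_o k%:~R.
Proof. by exists k, 0; rewrite mul0r addr0. Qed.

Lemma in_o0 : in_o 0. Proof. exact: (in_o_int 0). Qed.
Lemma in_o1 : in_o 1. Proof. exact: (in_o_int 1). Qed.

Lemma in_oD x y : in_o x -> in_o y -> in_o (x + y).
Proof. by move=> [a [b ->]] [c [d ->]]; exists (a + c), (b + d); rewrite !intrD; ring. Qed.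

Lemma in_oN x : in_o x -> in_o (- x).
Proof. by move=> [a [b ->]]; exists (- a), (- b); rewrite !intrN; ring. Qed.

Lemma in_oM x y : in_o x -> in_o y -> in_o (x * y).
Proof.
move=> [a [b ->]] [c [d ->]]; exists (a * c - b * d), (a * d + b * c - b * d).
rewrite !(intrD, intrN, intrM).
have -> : (a%:~R + b%:~R * omega) * (c%:~R + d%:~R * omega) =
    a%:~R * c%:~R - b%:~R * d%:~R + (a%:~R * d%:~R + b%:~R * c%:~R - b%:~R * d%:~R) * omega
    + b%:~R * d%:~R * (omega ^+ 2 + omega + 1) by ring.
by rewrite omega_min_poly mulr0 addr0.
Qed.

Lemma in_o_sign (b : bool) : in_o ((-1) ^+ b).
Proof. by case: b; [apply: in_oN; exact: in_o1 | exact: in_o1]. Qed.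

Definition in3o (x : algC) : Prop := exists z, in_o z /\ x = 3%:R * z.

Lemma in3o0 : in3o 0.
Proof. by exists 0; split; [exact: in_o0 | rewrite mulr0]. Qed.

Lemma in3oD x y : in3o x -> in3o y -> in3o (x + y).
Proof. by move=> [a [oa ->]] [b [ob ->]]; exists (a + b); rewrite mulrDr; split; [exact: in_oD|]. Qed.

Lemma in3oN x : in3o x -> in3o (- x).
Proof. by move=> [a [oa ->]]; exists (- a); rewrite mulrN; split; [exact: in_oN|]. Qed.

Lemma in3oMo x y : in3o x -> in_o y -> in3o (x * y).
Proof. by move=> [a [oa ->]] oy; exists (a * y); rewrite mulrA; split; [exact: in_oM|]. Qed.

Definition o_mx n (M : 'M[algC]_n) : Prop := forall i j, in_o (M i j).
Definition o3_mx n (M : 'M[algC]_n) : Prop := forall i j, in3o (M i j).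

Lemma in_o_det n (M : 'M[algC]_n) : o_mx M -> in_o (\det M).
Proof.
move=> oM; apply: big_ind; [exact: in_o0 | exact: in_oD |] => s _.
apply: in_oM; first exact: in_o_sign.
by apply: big_ind; [exact: in_o1 | exact: in_oM | move=> i _; apply: oM].
Qed.

Section IntegralMatrices.

Variable n : nat.
Implicit Types M N : 'M[algC]_n.

Lemma o_mx1 : o_mx (1%:M : 'M[algC]_n).
Proof. by move=> i j; rewrite mxE; case: (i == j); [exact: in_o1 | exact: in_o0]. Qed.

Lemma o_mx_mul M N : o_mx M -> o_mx N -> o_mx (M *m N).
Proof.
move=> oM oN i j; rewrite mxE; apply: big_ind; [exact: in_o0 | exact: in_oD |].
by move=> k _; apply: in_oM.
Qed.

Lemma o_mx_adj M : o_mx M -> o_mx (\adj M).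
Proof.
move=> oM i j; rewrite mxE /cofactor -signr_odd; apply: in_oM; first exact: in_o_sign.
by apply: in_o_det => k l; rewrite !mxE.
Qed.

Lemma o3_mxD M N : o3_mx M -> o3_mx N -> o3_mx (M + N).
Proof. by move=> oM oN i j; rewrite mxE; apply: in3oD. Qed.

Lemma o3_mxN M : o3_mx M -> o3_mx (- M).
Proof. by move=> oM i j; rewrite mxE; apply: in3oN. Qed.

Lemma o3_mx_mul M N : o3_mx M -> o_mx N -> o3_mx (M *m N).
Proof.
move=> oM oN i j; rewrite mxE; apply: big_ind; [exact: in3o0 | exact: in3oD |].
by move=> k _; apply: in3oMo.
Qed.

End IntegralMatrices.

Lemma Gamma3P A : Gamma3 A <-> [/\ o_mx A, \det A = 1 & o3_mx (A - 1%:M)].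
Proof.
have congE i j : cong3 (A i j) (1%:M i j) <-> in3o ((A - 1%:M) i j).
  by rewrite !mxE.
split=> [[oA [detA congA]] | [oA detA o3A]].
  by split=> // i j; apply/congE.
by split=> //; split=> // i j; apply/congE.
Qed.

Lemma Gamma3_mul A B : Gamma3 A -> Gamma3 B -> Gamma3 (A *m B).
Proof.
move=> /Gamma3P[oA detA o3A] /Gamma3P[oB detB o3B]; apply/Gamma3P; split.
- exact: o_mx_mul.
- by rewrite det_mulmx detA detB mulr1.
- have -> : A *m B - 1%:M = (A - 1%:M) *m B + (B - 1%:M).
    by rewrite mulmxBl mul1mx addrA subrK.
  by apply: o3_mxD => //; apply: o3_mx_mul.
Qed.

Lemma Gamma3_adj B : Gamma3 B -> Gamma3 (\adj B).
Proof.
move=> /Gamma3P[oB detB o3B]; apply/Gamma3P; split.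
- exact: o_mx_adj.
- have := det_mulmx (\adj B) B.
  by rewrite mul_adj_mx detB det_scalar expr1n mulr1.
- have -> : \adj B - 1%:M = - (B - 1%:M) *m \adj B.
    by rewrite opprB mulmxBl mul1mx mul_mx_adj detB.
  by apply: o3_mx_mul; [apply: o3_mxN | apply: o_mx_adj].
Qed.

Lemma Gamma3_1 : Gamma3 1%:M.
Proof.
apply/Gamma3P; split; [exact: o_mx1 | exact: det1 |].
by move=> i j; rewrite subrr mxE; exact: in3o0.
Qed.

Lemma Inv_upper_unitriangular_mul U B :
  upper_unitriangular U -> Inv (U *m B) = Inv B.
Proof.
move=> [lowU diagU].
have u20 : U r2 r0 = 0 by apply: lowU; rewrite val_r2.
have u21 : U r2 r1 = 0 by apply: lowU; rewrite val_r1 val_r2.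
have u10 : U r1 r0 = 0 by apply: lowU; rewrite val_r1.
rewrite /Inv !mulmx3 u20 u21 u10 !diagU.
by congr [:: _; _; _; _; _; _]; ring.
Qed.

Lemma Inv_eq_row2 A B : Inv A = Inv B -> A r2 =1 B r2.
Proof. by case=> e0 e1 e2 _ _ _ k; have [->|->|->] := ord3P k. Qed.

Lemma Inv_eq_cofactor_row0 A B : Inv A = Inv B -> cofactor A r0 =1 cofactor B r0.
Proof.
case=> _ _ _ m01 m02 m12 k.
have [cA0 cA1 cA2] := cofactor3_row0 A; have [cB0 cB1 cB2] := cofactor3_row0 B.
by have [->|->|->] := ord3P k; rewrite ?(cA0, cA1, cA2, cB0, cB1, cB2) ?m01 ?m02 ?m12.
Qed.

Lemma GammaInf3_mul U V : GammaInf3 U -> GammaInf3 V -> GammaInf3 (U *m V).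
Proof.
move=> [gU uU] [gV uV]; split; first exact: Gamma3_mul.
exact: upper_unitriangular_mul.
Qed.

Lemma orbitInf3_refl A : orbitInf3 A A.
Proof.
exists 1%:M; split; last by rewrite mul1mx.
by split; [exact: Gamma3_1 | exact: upper_unitriangular1].
Qed.

Lemma orbitInf3_trans A B M : orbitInf3 B A -> orbitInf3 A M -> orbitInf3 B M.
Proof.
move=> [U [gU ->]] [V [gV ->]]; exists (V *m U); split; last by rewrite mulmxA.
exact: GammaInf3_mul.
Qed.

Lemma orbitInf3_Inv A B : orbitInf3 B A -> Inv A = Inv B.
Proof. by move=> [U [[_ uU] ->]]; apply: Inv_upper_unitriangular_mul. Qed.

Lemma Inv_eq_orbitInf3 A B : Gamma3 A -> Gamma3 B -> Inv A = Inv B -> orbitInf3 B A.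
Proof.
move=> gA gB eq_Inv; have /Gamma3P[_ detA _] := gA; have /Gamma3P[_ detB _] := gB.
exists (A *m \adj B); split; last by rewrite -mulmxA mul_adj_mx detB mulmx1.
split; first by apply: Gamma3_mul => //; apply: Gamma3_adj.
by apply: mul_adj_upper_unitriangular;
  [exact: Inv_eq_row2 | exact: Inv_eq_cofactor_row0 | |].
Qed.

Theorem theorem2p7 (A B : 'M[algC]_3) :
  Gamma3 A -> Gamma3 B ->
  ((forall M, orbitInf3 A M <-> orbitInf3 B M) <-> Inv A = Inv B).
Proof.
move=> gA gB; split=> [same_orbit | eq_Inv].
  by apply: orbitInf3_Inv; apply/same_orbit/orbitInf3_refl.
have BA := Inv_eq_orbitInf3 gA gB eq_Inv.
have AB := Inv_eq_orbitInf3 gB gA (esym eq_Inv).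
by move=> M; split; [exact: orbitInf3_trans BA | exact: orbitInf3_trans AB].
Qed.
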